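(* Let $F\in\mathrm{Lip}_{\rm loc}(\mathbb{R})$ and suppose $F$ is linear (affine) on an interval $(a,b)\subset\mathbb{R}$ for some $a<b$. Then there exists an initial datum $g\in\mathrm{Lip}(\mathbb{R})$ and a constant $c_0>0$ depending only on $F$ and $g$ such that for every $\varepsilon\in(0,\tfrac14)$, \[ |u^\varepsilon(0,1)-u(0,1)|\ge c_0\sqrt{\varepsilon}, \] where $u^\varepsilon$ is the viscosity solution of $u^\varepsilon_t+F(u^\varepsilon_x)=\varepsilon u^\varepsilon_{xx}$ in $\mathbb{R}\times(0,\infty)$, $u^\varepsilon(\cdot,0)=g$, and $u$ is the viscosity solution of $u_t+F(u_x)=0$ in $\mathbb{R}\times(0,\infty)$, $u(\cdot,0)=g$. *)

From Stdlib Require Import Reals.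
From Coquelicot Require Import Coquelicot.
Open Scope R_scope.

Definition loc_lipschitz (F : R -> R) : Prop :=
  forall r : R, exists L : R, forall p q : R,
    Rabs p <= r -> Rabs q <= r -> Rabs (F p - F q) <= L * Rabs (p - q).

Definition lipschitz (g : R -> R) : Prop :=
  exists L : R, forall x y : R, Rabs (g x - g y) <= L * Rabs (x - y).

Definition affine_on (F : R -> R) (a b : R) : Prop :=
  exists p q : R, forall x : R, a < x < b -> F x = p * x + q.

Definition cont2 (f : R -> R -> R) : Prop :=
  forall x t eps : R, 0 < eps -> exists delta : R, 0 < delta /\
    forall y s : R, Rabs (y - x) < delta -> Rabs (s - t) < delta ->
      Rabs (f y s - f x t) < eps.

Definition C1_test (phi phit phix : R -> R -> R) : Prop :=
  cont2 phi /\ cont2 phit /\ cont2 phix /\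
  (forall x t, is_derive (fun s => phi x s) t (phit x t)) /\
  (forall x t, is_derive (fun y => phi y t) x (phix x t)).

Definition C21_test (phi phit phix phixx : R -> R -> R) : Prop :=
  C1_test phi phit phix /\ cont2 phixx /\
  (forall x t, is_derive (fun y => phix y t) x (phixx x t)).

Definition loc_max_at (w : R -> R -> R) (x0 t0 : R) : Prop :=
  exists r : R, 0 < r /\ forall y s : R, Rabs (y - x0) < r -> Rabs (s - t0) < r ->
    0 < s -> w y s <= w x0 t0.
Definition loc_min_at (w : R -> R -> R) (x0 t0 : R) : Prop :=
  exists r : R, 0 < r /\ forall y s : R, Rabs (y - x0) < r -> Rabs (s - t0) < r ->
    0 < s -> w x0 t0 <= w y s.

Definition cont_closed_half (u : R -> R -> R) : Prop :=
  forall x t eps : R, 0 <= t -> 0 < eps -> exists delta : R, 0 < delta /\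
    forall y s : R, 0 <= s -> Rabs (y - x) < delta -> Rabs (s - t) < delta ->
      Rabs (u y s - u x t) < eps.

Definition visc_sol_viscous (eps : R) (F : R -> R) (u : R -> R -> R) : Prop :=
  cont_closed_half u /\
  (forall phi phit phix phixx x0 t0, C21_test phi phit phix phixx -> 0 < t0 ->
     loc_max_at (fun y s => u y s - phi y s) x0 t0 ->
     phit x0 t0 + F (phix x0 t0) - eps * phixx x0 t0 <= 0) /\
  (forall phi phit phix phixx x0 t0, C21_test phi phit phix phixx -> 0 < t0 ->
     loc_min_at (fun y s => u y s - phi y s) x0 t0 ->
     phit x0 t0 + F (phix x0 t0) - eps * phixx x0 t0 >= 0).

Definition visc_sol_HJ (F : R -> R) (u : R -> R -> R) : Prop :=
  cont_closed_half u /\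
  (forall phi phit phix x0 t0, C1_test phi phit phix -> 0 < t0 ->
     loc_max_at (fun y s => u y s - phi y s) x0 t0 ->
     phit x0 t0 + F (phix x0 t0) <= 0) /\
  (forall phi phit phix x0 t0, C1_test phi phit phix -> 0 < t0 ->
     loc_min_at (fun y s => u y s - phi y s) x0 t0 ->
     phit x0 t0 + F (phix x0 t0) >= 0).

(* Uniqueness class for the Cauchy problems with Lipschitz data:
   uniformly continuous on R x [0,oo) and Lipschitz in x uniformly in t. *)
Definition sol_class (u : R -> R -> R) : Prop :=
  (forall eps : R, 0 < eps -> exists delta : R, 0 < delta /\
    forall x y t s : R, 0 <= t -> 0 <= s -> Rabs (y - x) < delta ->
      Rabs (s - t) < delta -> Rabs (u y s - u x t) < eps) /\
  (exists L : R, forall x y t : R, 0 <= t -> Rabs (u x t - u y t) <= L * Rabs (x - y)).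

Definition initial_datum (u : R -> R -> R) (g : R -> R) : Prop :=
  forall x : R, u x 0 = g x.

(* The datum [g x = m x + c |x + P|], with [[m - c, m + c]] inside the interval where
   [F p = P p + Q], has a single convex kink. The inviscid equation transports it with speed
   [P] to [(0, 1)], where [u 0 1 = - m P - Q]; diffusion rounds it off over a width of order
   [sqrt (eps t)], which lifts the value at the kink by a multiple of [c sqrt eps]. Both facts
   follow by comparison with explicit barriers built from [sqrt (Y^2 + d)], [Y] the signed
   distance to the kink: [d] a small constant for the inviscid problem, and [d] of order
   [eps (1 + t)] for the viscous one. Comparison on the unbounded half-plane is proved
   by penalizing with a function growing linearly in [|x| + t]; this works because the
   barriers have bounded gradients, on which [F] is Lipschitz, and the solutions grow at most
   linearly. *)

From Stdlib Require Import Reals Lra Psatz ClassicalEpsilon.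
From Coquelicot Require Import Coquelicot.
Open Scope R_scope.

Lemma sqrt_diff_le A B e : 0 < e -> e <= A -> e <= B ->
  Rabs (sqrt A - sqrt B) <= Rabs (A - B) / (2 * sqrt e).
Proof.
  intros He HA HB.
  pose proof (sqrt_le_1_alt e A HA). pose proof (sqrt_le_1_alt e B HB). pose proof (sqrt_lt_R0 e He).
  assert (E : sqrt A - sqrt B = (A - B) / (sqrt A + sqrt B)).
  { apply (Rmult_eq_reg_r (sqrt A + sqrt B)); [|lra].
    replace ((A - B) / (sqrt A + sqrt B) * (sqrt A + sqrt B)) with (A - B) by (field; lra).
    replace ((sqrt A - sqrt B) * (sqrt A + sqrt B)) with (sqrt A * sqrt A - sqrt B * sqrt B) by ring.
    rewrite !sqrt_sqrt by lra. ring. }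
  rewrite E. unfold Rdiv. rewrite Rabs_mult, Rabs_inv, (Rabs_pos_eq (sqrt A + sqrt B)) by lra.
  apply Rmult_le_compat_l; [apply Rabs_pos|]. apply Rinv_le_contravar; lra.
Qed.

Lemma Rabs_le_of_range p m c : m - c <= p <= m + c -> Rabs p <= Rabs m + c.
Proof.
  intros Hp. apply Rabs_le_between.
  pose proof (Rle_abs m). pose proof (Rle_abs (- m)) as Hm. rewrite Rabs_Ropp in Hm. lra.
Qed.

(** * Smooth absolute value and positive part *)

(* [sabs d] is a smooth approximation of [Rabs]; [sabs1 d] and [sabs2 d] are its first two
   derivatives. *)
Definition sabs (d y : R) : R := sqrt (y * y + d).
Definition sabs1 (d y : R) : R := y / sabs d y.
Definition sabs2 (d y : R) : R := (sabs d y - y * sabs1 d y) / (sabs d y * sabs d y).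

Lemma sqr_plus_pos y d : 0 < d -> 0 < y * y + d.
Proof. intros. nra. Qed.

Lemma sabs_sqr d y : 0 <= d -> sabs d y * sabs d y = y * y + d.
Proof. intros Hd. apply sqrt_sqrt. nra. Qed.

Lemma sabs_pos d y : 0 < d -> 0 < sabs d y.
Proof. intros Hd. apply sqrt_lt_R0, sqr_plus_pos, Hd. Qed.

Lemma sabs_neq0 d y : 0 < d -> sabs d y <> 0.
Proof. intros Hd. apply Rgt_not_eq, sabs_pos, Hd. Qed.

Lemma Rabs_le_sabs d y : 0 <= d -> Rabs y <= sabs d y.
Proof. intros Hd. rewrite <- sqrt_Rsqr_abs. apply sqrt_le_1_alt. unfold Rsqr. lra. Qed.

Lemma Rabs_lt_sabs d y : 0 < d -> Rabs y < sabs d y.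
Proof. intros Hd. rewrite <- sqrt_Rsqr_abs. apply sqrt_lt_1_alt. unfold Rsqr. nra. Qed.

Lemma sabs_le d y : 0 <= d -> sabs d y <= Rabs y + sqrt d.
Proof.
  intros Hd. pose proof (sqrt_pos d). pose proof (sqrt_sqrt d Hd). pose proof (Rabs_pos y).
  assert (Rabs y * Rabs y = y * y) by (rewrite <- Rabs_mult; apply Rabs_pos_eq; nra).
  unfold sabs. rewrite <- (sqrt_square (Rabs y + sqrt d)) by lra. apply sqrt_le_1_alt. nra.
Qed.

Lemma sabs_lipschitz d a b : 0 <= d -> Rabs (sabs d a - sabs d b) <= Rabs (a - b).
Proof.
  intros Hd.
  pose proof (Rabs_le_sabs d a Hd). pose proof (Rabs_le_sabs d b Hd).
  pose proof (sabs_sqr d a Hd). pose proof (sabs_sqr d b Hd).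
  set (ra := sabs d a) in *. set (rb := sabs d b) in *.
  pose proof (Rabs_pos a). pose proof (Rabs_pos b). pose proof (Rabs_triang a b).
  destruct (Req_dec (ra + rb) 0) as [Z|NZ].
  - replace (ra - rb) with 0 by lra. rewrite Rabs_R0. apply Rabs_pos.
  - assert (E : ra - rb = (a - b) * (a + b) / (ra + rb)) by (field_simplify_eq; nra).
    rewrite E. unfold Rdiv. rewrite !Rabs_mult, Rabs_inv, (Rabs_pos_eq (ra + rb)) by lra.
    apply (Rmult_le_reg_r (ra + rb)); [lra|].
    rewrite Rmult_assoc, Rinv_l by exact NZ. pose proof (Rabs_pos (a - b)). nra.
Qed.

Lemma Rabs_sabs1_lt1 d y : 0 < d -> Rabs (sabs1 d y) < 1.
Proof.
  intros Hd. pose proof (Rabs_lt_sabs d y Hd). pose proof (sabs_pos d y Hd).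
  unfold sabs1, Rdiv. rewrite Rabs_mult, Rabs_inv, (Rabs_pos_eq (sabs d y)) by lra.
  apply (Rmult_lt_reg_r (sabs d y)); [lra|]. rewrite Rmult_assoc, Rinv_l; lra.
Qed.

Lemma sabs2E d y : 0 < d -> sabs2 d y = d / (sabs d y * sabs d y * sabs d y).
Proof.
  intros Hd. unfold sabs2, sabs1. pose proof (sabs_neq0 d y Hd) as Hr.
  replace (sabs d y - y * (y / sabs d y)) with ((sabs d y * sabs d y - y * y) / sabs d y)
    by (field; exact Hr).
  rewrite sabs_sqr by lra. field. split; [exact Hr | apply Rgt_not_eq, sqr_plus_pos, Hd].
Qed.

Lemma sabs_ge1 y : 1 <= sabs 1 y.
Proof. rewrite <- sqrt_1 at 1. apply sqrt_le_1_alt. nra. Qed.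

Lemma sabs2_pos_le1 y : 0 < sabs2 1 y <= 1.
Proof.
  rewrite sabs2E by lra. pose proof (sabs_ge1 y).
  assert (1 <= sabs 1 y * sabs 1 y * sabs 1 y) by nra.
  split; [apply Rdiv_lt_0_compat; lra|].
  apply (Rmult_le_reg_r (sabs 1 y * sabs 1 y * sabs 1 y)); [lra|].
  unfold Rdiv. rewrite Rmult_assoc, Rinv_l; lra.
Qed.

(* [pos] discharges positivity side conditions. [Rminus] is unfolded so that [field] treats
   [sqrt (a - b)] and [sqrt (a + - b)], both produced by [auto_derive], as the same atom. *)
Ltac derive_smooth pos :=
  auto_derive;
  [ repeat split; first [apply sqr_plus_pos; pos | apply sabs_neq0; pos | pos]
  | unfold Rminus; field; repeat split; first [apply sabs_neq0; pos | pos] ].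

Definition spos (z : R) : R := (z + sabs 1 z) / 2.
Definition spos1 (z : R) : R := (1 + sabs1 1 z) / 2.
Definition spos2 (z : R) : R := sabs2 1 z / 2.

Lemma spos_ge z : z <= spos z.
Proof. unfold spos. pose proof (Rabs_lt_sabs 1 z Rlt_0_1). pose proof (Rle_abs z). lra. Qed.

Lemma spos_pos z : 0 < spos z.
Proof.
  unfold spos. pose proof (Rabs_lt_sabs 1 z Rlt_0_1) as Hz. apply Rabs_lt_between in Hz. lra.
Qed.

Lemma spos_le_neg z : z < 0 -> spos z <= / (- 4 * z).
Proof.
  intros Hz. unfold spos. pose proof (sabs_sqr 1 z Rle_0_1) as Hsqr.
  assert (E : (sabs 1 z + z) * (sabs 1 z - z) = 1) by nra.
  pose proof (Rabs_lt_sabs 1 z Rlt_0_1) as Hz'. apply Rabs_lt_between in Hz'.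
  apply (Rmult_le_reg_r (- 4 * z)); [lra|]. rewrite Rinv_l by lra. nra.
Qed.

Lemma spos_lipschitz z w : Rabs (spos z - spos w) <= Rabs (z - w).
Proof.
  unfold spos. pose proof (sabs_lipschitz 1 z w Rle_0_1).
  pose proof (Rabs_triang (z - w) (sabs 1 z - sabs 1 w)).
  replace ((z + sabs 1 z) / 2 - (w + sabs 1 w) / 2)
    with (((z - w) + (sabs 1 z - sabs 1 w)) / 2) by field.
  unfold Rdiv. rewrite Rabs_mult, (Rabs_pos_eq (/ 2)) by lra. lra.
Qed.

Lemma spos1_bounds z : 0 < spos1 z < 1.
Proof.
  unfold spos1. pose proof (Rabs_sabs1_lt1 1 z Rlt_0_1) as Hz.
  apply Rabs_lt_between in Hz. lra.
Qed.

Lemma spos2_bounds z : 0 <= spos2 z <= 2 * spos1 z.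
Proof.
  unfold spos2, spos1, sabs1. rewrite sabs2E by lra.
  pose proof (sabs_sqr 1 z Rle_0_1). pose proof (sabs_ge1 z).
  pose proof (Rabs_lt_sabs 1 z Rlt_0_1) as H1. apply Rabs_lt_between in H1.
  set (r := sabs 1 z) in *.
  assert (Hr3 : 0 < r * r * r) by (apply Rmult_lt_0_compat; nra).
  assert (E : (r + z) * (r - z) = 1) by nra.
  assert (Hk : 1 <= (r + z) * (2 * r * r)) by nra.
  pose proof (Rdiv_lt_0_compat 1 _ Rlt_0_1 Hr3). split; [lra|].
  replace (2 * ((1 + z / r) / 2)) with ((r + z) / r) by (field; lra).
  apply (Rmult_le_reg_r (2 * (r * r * r))); [lra|].
  replace (1 / (r * r * r) / 2 * (2 * (r * r * r))) with 1 by (field; lra).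
  replace ((r + z) / r * (2 * (r * r * r))) with ((r + z) * (2 * r * r)) by (field; lra).
  lra.
Qed.

(** * Functions on the half-plane *)

Lemma cont2_continuous (f : R -> R -> R) :
  cont2 f <-> forall x t, continuous (fun p : R * R => f (fst p) (snd p)) (x, t).
Proof.
  split.
  - intros Hf x t. apply filterlim_locally. intros [e He].
    destruct (Hf x t e He) as [d [Hd Hfd]].
    exists (mkposreal d Hd). intros [y s] [Hy Hs]. apply (Hfd y s Hy Hs).
  - intros Hf x t e He.
    destruct (proj1 (filterlim_locally _ _) (Hf x t) (mkposreal e He)) as [d Hd].
    exists d. split; [apply cond_pos|]. intros y s Hy Hs. apply (Hd (y, s)). split; assumption.
Qed.

Lemma cont2_plus f g : cont2 f -> cont2 g -> cont2 (fun x t => f x t + g x t).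
Proof.
  rewrite !cont2_continuous. intros Hf Hg x t.
  apply (continuous_plus (fun p : R * R => f (fst p) (snd p)) (fun p => g (fst p) (snd p))); auto.
Qed.

Lemma cont2_opp f : cont2 f -> cont2 (fun x t => - f x t).
Proof.
  rewrite !cont2_continuous. intros Hf x t.
  apply (continuous_opp (fun p : R * R => f (fst p) (snd p))); auto.
Qed.

Lemma cont2_continuity_pt_x f t x : cont2 f -> continuity_pt (fun y => f y t) x.
Proof.
  intros Hf. apply continuity_pt_locally. intros [e He].
  destruct (Hf x t e He) as [d [Hd Hfd]]. exists (mkposreal d Hd). intros y Hy.
  apply Hfd; [exact Hy|]. rewrite Rminus_diag, Rabs_R0. exact Hd.
Qed.

Ltac continuity2 :=
  repeat match goal with
  | |- continuous (fun _ => ?k) _ => apply continuous_const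
  | |- continuous (fun q => fst q) _ => apply continuous_fst
  | |- continuous (fun q => snd q) _ => apply continuous_snd
  | |- continuous (fun q => @?a q + @?b q) _ => apply (continuous_plus a b)
  | |- continuous (fun q => @?a q * @?b q) _ => apply (continuous_mult a b)
  | |- continuous (fun q => - @?a q) _ => apply (continuous_opp a)
  | |- continuous (fun q => @?a q - @?b q) _ => apply (continuous_minus a b)
  | |- continuous (fun q => @?a q / @?b q) _ => apply (continuous_mult a (fun q => / b q))
  | |- continuous (fun q => / @?a q) _ =>
      apply (continuous_comp a Rinv); [|apply continuous_Rinv]
  | |- continuous (fun q => sqrt (@?a q)) _ =>
      apply (continuous_comp a sqrt); [|apply continuous_sqrt]
  end.

Lemma C21_test_plus f ft fx fxx g gt gx gxx :
  C21_test f ft fx fxx -> C21_test g gt gx gxx ->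
  C21_test (fun x t => f x t + g x t) (fun x t => ft x t + gt x t)
           (fun x t => fx x t + gx x t) (fun x t => fxx x t + gxx x t).
Proof.
  intros [[Cf [Cft [Cfx [Dft Dfx]]]] [Cfxx Dfxx]] [[Cg [Cgt [Cgx [Dgt Dgx]]]] [Cgxx Dgxx]].
  split; [split; [|split; [|split; [|split]]]|split]; try (apply cont2_plus; assumption); intros x t.
  - apply (is_derive_plus (fun s => f x s) (fun s => g x s)); auto.
  - apply (is_derive_plus (fun y => f y t) (fun y => g y t)); auto.
  - apply (is_derive_plus (fun y => fx y t) (fun y => gx y t)); auto.
Qed.

Lemma C21_test_opp f ft fx fxx :
  C21_test f ft fx fxx ->
  C21_test (fun x t => - f x t) (fun x t => - ft x t) (fun x t => - fx x t) (fun x t => - fxx x t).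
Proof.
  intros [[Cf [Cft [Cfx [Dft Dfx]]]] [Cfxx Dfxx]].
  split; [split; [|split; [|split; [|split]]]|split]; try (apply cont2_opp; assumption); intros x t.
  - apply (is_derive_opp (fun s => f x s)); auto.
  - apply (is_derive_opp (fun y => f y t)); auto.
  - apply (is_derive_opp (fun y => fx y t)); auto.
Qed.

Definition time_equicont (Phi : R -> R -> R) : Prop :=
  forall e, 0 < e -> exists d, 0 < d /\
    forall x t s, 0 <= t -> 0 <= s -> Rabs (t - s) < d -> Rabs (Phi x t - Phi x s) <= e.

Lemma Rmax0_lipschitz t s : Rabs (Rmax 0 t - Rmax 0 s) <= Rabs (t - s).
Proof.
  unfold Rmax. destruct (Rle_dec 0 t), (Rle_dec 0 s); apply Rabs_le;
    pose proof (Rle_abs (t - s)); pose proof (Rle_abs (- (t - s)));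
    rewrite Rabs_Ropp in *; lra.
Qed.

Lemma sup_equicont_continuous (Psi : R -> R -> R) (xm : R -> R) (X : R) :
  (forall t, -X <= xm t <= X) ->
  (forall t y, -X <= y <= X -> Psi y t <= Psi (xm t) t) ->
  (forall e, 0 < e -> exists d, 0 < d /\
     forall x t s, Rabs (t - s) < d -> Rabs (Psi x t - Psi x s) <= e) ->
  forall c, continuity_pt (fun t => Psi (xm t) t) c.
Proof.
  intros Hxm Hmax Heq c. apply continuity_pt_locally. intros [e He].
  destruct (Heq (e / 2)) as [d [Hd Hpsi]]; [lra|].
  exists (mkposreal d Hd). intros t Ht. simpl.
  assert (Htc : Rabs (t - c) < d) by exact Ht.
  assert (Hct : Rabs (c - t) < d) by (rewrite Rabs_minus_sym; exact Htc).
  pose proof (Hmax t (xm c) (Hxm c)). pose proof (Hmax c (xm t) (Hxm t)).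
  pose proof (Hpsi (xm c) t c Htc) as Htc'. pose proof (Hpsi (xm t) c t Hct) as Hct'.
  apply Rabs_le_between in Htc', Hct'. apply Rabs_lt_between. lra.
Qed.

Lemma box_attains_max (Phi : R -> R -> R) (X : R) : 0 <= X ->
  (forall t x, 0 <= t -> continuity_pt (fun y => Phi y t) x) ->
  time_equicont Phi ->
  exists xs ts, 0 <= ts <= X /\
    forall y s, -X <= y <= X -> 0 <= s <= X -> Phi y s <= Phi xs ts.
Proof.
  intros HX Hcont Heq.
  (* Extending [Phi] to [t < 0] by [Phi y 0] makes [continuity_ab_maj] usable at [t = 0]. *)
  set (Psi := fun y t => Phi y (Rmax 0 t)).
  assert (Hmaximizer : forall t, exists x, -X <= x <= X /\
            forall y, -X <= y <= X -> Psi y t <= Psi x t).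
  { intros t. destruct (continuity_ab_maj (fun y => Psi y t) (-X) X) as [x [Hx1 Hx2]]; [lra| |].
    - intros c _. apply Hcont, Rmax_l.
    - exists x. auto. }
  destruct (choice _ Hmaximizer) as [xm Hxm].
  assert (HM : forall c, continuity_pt (fun t => Psi (xm t) t) c).
  { apply (sup_equicont_continuous Psi xm X); try (intros; apply Hxm; auto).
    intros e He. destruct (Heq e He) as [d [Hd Hphi]]. exists d. split; [exact Hd|].
    intros x t s Hts. apply Hphi; try apply Rmax_l.
    eapply Rle_lt_trans; [apply Rmax0_lipschitz | exact Hts]. }
  destruct (continuity_ab_maj (fun t => Psi (xm t) t) 0 X HX (fun c _ => HM c)) as [ts [Hts HtsX]].
  exists (xm ts), ts. split; [exact HtsX|]. intros y s Hy Hs.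
  pose proof (proj2 (Hxm s) y Hy) as Hys. pose proof (Hts s Hs) as Hsts.
  unfold Psi in Hys, Hsts. rewrite (Rmax_right 0 s), (Rmax_right 0 ts) in Hsts by lra.
  rewrite (Rmax_right 0 s) in Hys by lra. lra.
Qed.

Lemma coercive_attains_max (Phi : R -> R -> R) (C : R) :
  (forall t x, 0 <= t -> continuity_pt (fun y => Phi y t) x) ->
  time_equicont Phi ->
  (forall x t, 0 <= t -> Phi x t <= C - (Rabs x + t)) ->
  exists xs ts, 0 <= ts /\ forall y s, 0 <= s -> Phi y s <= Phi xs ts.
Proof.
  intros Hcont Heq Hcoer.
  set (X := Rmax 0 (C - Phi 0 0)).
  destruct (box_attains_max Phi X (Rmax_l _ _) Hcont Heq) as [xs [ts [Hts Hmax]]].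
  exists xs, ts. split; [lra|]. intros y s Hs.
  pose proof (Rabs_pos y).
  destruct (Rle_dec (Rabs y + s) X) as [Hin|Hout].
  - apply Hmax; [apply Rabs_le_between|]; lra.
  - assert (Phi 0 0 <= Phi xs ts) by (apply Hmax; unfold X; pose proof (Rmax_l 0 (C - Phi 0 0)); lra).
    pose proof (Hcoer y s Hs). pose proof (Rmax_r 0 (C - Phi 0 0)). unfold X in Hout. lra.
Qed.

Lemma sol_class_time_equicont u : sol_class u -> time_equicont u.
Proof.
  intros [Hu _] e He. destruct (Hu e He) as [d [Hd Hud]]. exists d. split; [exact Hd|].
  intros x t s Ht Hs Hts. left. apply (Hud x x s t Hs Ht); [|exact Hts].
  rewrite Rminus_diag, Rabs_R0. exact Hd.
Qed.

Lemma sol_class_continuity_pt_x u t x : sol_class u -> 0 <= t -> continuity_pt (fun y => u y t) x.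
Proof.
  intros [Hu _] Ht. apply continuity_pt_locally. intros [e He].
  destruct (Hu e He) as [d [Hd Hud]]. exists (mkposreal d Hd). intros y Hy.
  apply (Hud x y t t Ht Ht Hy). rewrite Rminus_diag, Rabs_R0. exact Hd.
Qed.

Lemma time_lipschitz_equicont v L :
  (forall x t s, 0 <= t -> 0 <= s -> Rabs (v x t - v x s) <= L * Rabs (t - s)) ->
  time_equicont v.
Proof.
  intros Hv e He. exists (e / (Rabs L + 1)). split; [apply Rdiv_lt_0_compat; pose proof (Rabs_pos L); lra|].
  intros x t s Ht Hs Hts. eapply Rle_trans; [apply Hv; auto|].
  apply Rle_trans with (Rabs L * Rabs (t - s)); [apply Rmult_le_compat_r; [apply Rabs_pos|apply Rle_abs]|].
  pose proof (Rabs_pos L). pose proof (Rabs_pos (t - s)).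
  apply Rle_trans with ((Rabs L + 1) * (e / (Rabs L + 1))); [nra|].
  right. field. lra.
Qed.

Lemma time_equicont_minus f g :
  time_equicont f -> time_equicont g -> time_equicont (fun x t => f x t - g x t).
Proof.
  intros Hf Hg e He.
  destruct (Hf (e / 2)) as [d1 [Hd1 Hf1]]; [lra|]. destruct (Hg (e / 2)) as [d2 [Hd2 Hg2]]; [lra|].
  exists (Rmin d1 d2). split; [apply Rmin_pos; auto|]. intros x t s Ht Hs Hts.
  pose proof (Rmin_l d1 d2). pose proof (Rmin_r d1 d2).
  pose proof (Hf1 x t s Ht Hs ltac:(lra)). pose proof (Hg2 x t s Ht Hs ltac:(lra)).
  replace (f x t - g x t - (f x s - g x s)) with ((f x t - f x s) + - (g x t - g x s)) by ring.
  eapply Rle_trans; [apply Rabs_triang|]. rewrite Rabs_Ropp. lra.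
Qed.

Lemma uniformly_continuous_linear_growth (f : R -> R) d : 0 < d ->
  (forall t s, 0 <= t -> 0 <= s -> Rabs (t - s) < d -> Rabs (f t - f s) < 1) ->
  forall t, 0 <= t -> Rabs (f t - f 0) <= 2 * t / d + 1.
Proof.
  intros Hd Hf. set (h := d / 2).
  assert (Hsteps : forall n t, 0 <= t <= INR n * h -> Rabs (f t - f 0) <= INR n).
  { induction n as [|n IH]; intros t Ht.
    - simpl in Ht. replace t with 0 by (unfold h in Ht; lra).
      rewrite Rminus_diag, Rabs_R0. simpl. lra.
    - pose proof (pos_INR n). rewrite S_INR in Ht |- *.
      set (s := t * INR n / (INR n + 1)).
      assert (Hs : 0 <= s <= INR n * h).
      { unfold s. split; [apply Rmult_le_pos; [apply Rmult_le_pos|left; apply Rinv_0_lt_compat]; lra|].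
        apply (Rmult_le_reg_r (INR n + 1)); [lra|].
        replace (t * INR n / (INR n + 1) * (INR n + 1)) with (t * INR n) by (field; lra). nra. }
      assert (Hts : Rabs (t - s) < d).
      { replace (t - s) with (t / (INR n + 1)) by (unfold s; field; lra).
        rewrite Rabs_pos_eq by (apply Rmult_le_pos; [|left; apply Rinv_0_lt_compat]; lra).
        apply (Rmult_lt_reg_r (INR n + 1)); [lra|].
        replace (t / (INR n + 1) * (INR n + 1)) with t by (field; lra). unfold h in Ht. nra. }
      pose proof (Hf t s ltac:(lra) ltac:(lra) Hts). pose proof (IH s Hs).
      replace (f t - f 0) with ((f t - f s) + (f s - f 0)) by ring.
      pose proof (Rabs_triang (f t - f s) (f s - f 0)). lra. }
  intros t Ht. destruct (nfloor_ex (t / h)) as [n [Hn1 Hn2]].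
  { unfold h. apply Rdiv_le_0_compat; lra. }
  apply Rle_trans with (INR (S n)).
  - apply Hsteps. rewrite S_INR. split; [exact Ht|].
    apply (Rmult_lt_compat_r h) in Hn2; [|unfold h; lra].
    replace (t / h * h) with t in Hn2 by (field; unfold h; lra). lra.
  - rewrite S_INR. replace (2 * t / d) with (t / h) by (unfold h; field; lra). lra.
Qed.

Lemma sol_class_linear_growth u : sol_class u -> exists B, 0 <= B /\
  forall x t, 0 <= t -> Rabs (u x t - u 0 0) <= B * (1 + Rabs x + t).
Proof.
  intros [Huc [L HL]]. destruct (Huc 1 Rlt_0_1) as [d [Hd Hud]].
  assert (Htime := uniformly_continuous_linear_growth (u 0) d Hd).
  pose proof (Rabs_pos L). pose proof (Rdiv_lt_0_compat 2 d Rlt_0_2 Hd).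
  exists (Rabs L + 2 / d + 1). split; [lra|]. intros x t Ht.
  assert (H1 : Rabs (u 0 t - u 0 0) <= 2 * t / d + 1).
  { apply Htime; auto. intros t' s' Ht' Hs' Hts. apply (Hud 0 0 s' t' Hs' Ht'); [|exact Hts].
    rewrite Rminus_diag, Rabs_R0. exact Hd. }
  assert (H2 : Rabs (u x t - u 0 t) <= Rabs L * Rabs x).
  { eapply Rle_trans; [apply HL; auto|]. rewrite Rminus_0_r.
    apply Rmult_le_compat_r; [apply Rabs_pos|apply Rle_abs]. }
  replace (u x t - u 0 0) with ((u x t - u 0 t) + (u 0 t - u 0 0)) by ring.
  pose proof (Rabs_triang (u x t - u 0 t) (u 0 t - u 0 0)).
  pose proof (Rabs_pos x).
  replace (2 * t / d) with (2 / d * t) in H1 by (field; lra). nra.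
Qed.

(** * The penalty *)

(* A smoothed [S (|x| + K t - rho)^+]: for large [S] it makes [u - v - chi] coercive, and it
   vanishes as [rho -> oo]. *)
Definition chi (S K rho x t : R) : R := S * spos (sabs 1 x + K * t - rho).
Definition chit (S K rho x t : R) : R := S * spos1 (sabs 1 x + K * t - rho) * K.
Definition chix (S K rho x t : R) : R := S * spos1 (sabs 1 x + K * t - rho) * sabs1 1 x.
Definition chixx (S K rho x t : R) : R :=
  S * (spos2 (sabs 1 x + K * t - rho) * sabs1 1 x * sabs1 1 x + spos1 (sabs 1 x + K * t - rho) * sabs2 1 x).

Lemma is_derive_chi_t S K rho x t : is_derive (fun s => chi S K rho x s) t (chit S K rho x t).
Proof. unfold chi, chit, spos, spos1, sabs1, sabs. derive_smooth ltac:(apply Rlt_0_1). Qed.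

Lemma is_derive_chi_x S K rho x t : is_derive (fun y => chi S K rho y t) x (chix S K rho x t).
Proof. unfold chi, chix, spos, spos1, sabs1, sabs. derive_smooth ltac:(apply Rlt_0_1). Qed.

Lemma is_derive_chix_x S K rho x t : is_derive (fun y => chix S K rho y t) x (chixx S K rho x t).
Proof. unfold chix, chixx, spos1, spos2, sabs2, sabs1, sabs. derive_smooth ltac:(apply Rlt_0_1). Qed.

Lemma C21_test_chi S K rho : C21_test (chi S K rho) (chit S K rho) (chix S K rho) (chixx S K rho).
Proof.
  split; [split; [|split; [|split; [|split]]]|split];
    try (intros; first [apply is_derive_chi_t | apply is_derive_chi_x | apply is_derive_chix_x]);
    apply cont2_continuous; intros x t;
    unfold chi, chit, chix, chixx, spos, spos1, spos2, sabs2, sabs1, sabs; continuity2; simpl;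
    repeat apply Rmult_integral_contrapositive_currified; apply sabs_neq0, Rlt_0_1.
Qed.

Lemma chi_nonneg S K rho x t : 0 <= S -> 0 <= chi S K rho x t.
Proof. intros HS. unfold chi. pose proof (spos_pos (sabs 1 x + K * t - rho)). nra. Qed.

Lemma chi_ge S K rho x t : 0 <= S -> 1 <= K -> 0 <= t ->
  S * (Rabs x + t - rho) <= chi S K rho x t.
Proof.
  intros HS HK Ht. unfold chi. apply Rmult_le_compat_l; [exact HS|].
  pose proof (spos_ge (sabs 1 x + K * t - rho)). pose proof (Rabs_lt_sabs 1 x Rlt_0_1). nra.
Qed.

Lemma chi_le S K rho x t : 0 <= S -> sabs 1 x + K * t < rho ->
  chi S K rho x t <= S / (4 * (rho - (sabs 1 x + K * t))).
Proof.
  intros HS Hz. unfold chi. pose proof (spos_le_neg (sabs 1 x + K * t - rho) ltac:(lra)) as Hneg.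
  replace (- 4 * (sabs 1 x + K * t - rho)) with (4 * (rho - (sabs 1 x + K * t))) in Hneg by ring.
  unfold Rdiv. apply Rmult_le_compat_l; assumption.
Qed.

Lemma chi_time_lipschitz S K rho x t s : 0 <= S -> 0 <= K ->
  Rabs (chi S K rho x t - chi S K rho x s) <= S * K * Rabs (t - s).
Proof.
  intros HS HK. unfold chi.
  rewrite <- Rmult_minus_distr_l, Rabs_mult, (Rabs_pos_eq S), Rmult_assoc by exact HS.
  apply Rmult_le_compat_l; [exact HS|].
  eapply Rle_trans; [apply spos_lipschitz|].
  replace (sabs 1 x + K * t - rho - (sabs 1 x + K * s - rho)) with (K * (t - s)) by ring.
  rewrite Rabs_mult, (Rabs_pos_eq K) by exact HK. lra.
Qed.

Lemma Rabs_chix_le S K rho x t : 0 <= S -> Rabs (chix S K rho x t) <= S.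
Proof.
  intros HS. unfold chix. set (z := sabs 1 x + K * t - rho).
  rewrite !Rabs_mult, (Rabs_pos_eq S) by exact HS.
  pose proof (spos1_bounds z). pose proof (Rabs_sabs1_lt1 1 x Rlt_0_1).
  rewrite (Rabs_pos_eq (spos1 z)) by lra. pose proof (Rabs_pos (sabs1 1 x)).
  assert (spos1 z * Rabs (sabs1 1 x) <= 1) by nra. nra.
Qed.

Lemma chit_ge S K rho KF e x t : 0 <= S -> 0 <= KF -> 0 <= e -> KF + 3 * e <= K ->
  KF * Rabs (chix S K rho x t) + e * chixx S K rho x t <= chit S K rho x t.
Proof.
  intros HS HKF He HK. unfold chix, chixx, chit.
  set (z := sabs 1 x + K * t - rho).
  pose proof (spos1_bounds z). pose proof (spos2_bounds z). pose proof (sabs2_pos_le1 x).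
  pose proof (Rabs_sabs1_lt1 1 x Rlt_0_1) as Hd. pose proof (Rabs_pos (sabs1 1 x)).
  assert (Hd2 : sabs1 1 x * sabs1 1 x <= 1).
  { rewrite <- (Rabs_pos_eq (sabs1 1 x * sabs1 1 x)), Rabs_mult by nra. nra. }
  assert (Hxx : spos2 z * sabs1 1 x * sabs1 1 x + spos1 z * sabs2 1 x <= 3 * spos1 z) by nra.
  rewrite !Rabs_mult, (Rabs_pos_eq S), (Rabs_pos_eq (spos1 z)) by lra.
  assert (S * spos1 z * Rabs (sabs1 1 x) <= S * spos1 z) by (assert (0 <= S * spos1 z) by nra; nra).
  assert (e * (S * (spos2 z * sabs1 1 x * sabs1 1 x + spos1 z * sabs2 1 x)) <= e * (S * (3 * spos1 z))).
  { apply Rmult_le_compat_l; [exact He|]. apply Rmult_le_compat_l; assumption. }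
  assert (0 <= S * spos1 z) by nra. nra.
Qed.

(** * Comparison principle *)

Definition visc_subsol (eps : R) (F : R -> R) (u : R -> R -> R) : Prop :=
  forall phi phit phix phixx x0 t0, C21_test phi phit phix phixx -> 0 < t0 ->
    loc_max_at (fun y s => u y s - phi y s) x0 t0 ->
    phit x0 t0 + F (phix x0 t0) - eps * phixx x0 t0 <= 0.

Definition visc_supersol (eps : R) (F : R -> R) (u : R -> R -> R) : Prop :=
  forall phi phit phix phixx x0 t0, C21_test phi phit phix phixx -> 0 < t0 ->
    loc_min_at (fun y s => u y s - phi y s) x0 t0 ->
    phit x0 t0 + F (phix x0 t0) - eps * phixx x0 t0 >= 0.

Section Comparison.

Variables (eps : R) (F : R -> R) (u v vt vx vxx : R -> R -> R) (M L A : R).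

Hypotheses (eps_ge0 : 0 <= eps) (F_loc_lip : loc_lipschitz F)
  (u_sol : sol_class u) (u_sub : visc_subsol eps F u)
  (v_C21 : C21_test v vt vx vxx)
  (v_strict : forall x t, 0 < t -> 0 < vt x t + F (vx x t) - eps * vxx x t)
  (vx_bounded : forall x t, Rabs (vx x t) <= M)
  (v_time_lip : forall x t s, 0 <= t -> 0 <= s -> Rabs (v x t - v x s) <= L * Rabs (t - s))
  (v_lower : forall x t, 0 <= t -> - A * (1 + Rabs x + t) <= v x t)
  (u_le_v_init : forall x, u x 0 <= v x 0).

Lemma penalized_strict_supersol S K rho LF x t : 0 <= S ->
  (forall p q, Rabs p <= M + S -> Rabs q <= M + S -> Rabs (F p - F q) <= LF * Rabs (p - q)) ->
  Rabs LF + 3 * eps <= K -> 0 < t ->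
  0 < vt x t + chit S K rho x t + F (vx x t + chix S K rho x t)
      - eps * (vxx x t + chixx S K rho x t).
Proof.
  intros HS HFlip HK Ht.
  pose proof (vx_bounded x t) as Hvx. pose proof (Rabs_chix_le S K rho x t HS) as Hchix.
  assert (HF : F (vx x t) - Rabs LF * Rabs (chix S K rho x t) <= F (vx x t + chix S K rho x t)).
  { assert (Hsum : Rabs (vx x t + chix S K rho x t) <= M + S)
      by (eapply Rle_trans; [apply Rabs_triang | lra]).
    assert (Hvx' : Rabs (vx x t) <= M + S) by lra.
    pose proof (HFlip _ _ Hsum Hvx') as Hd.
    replace (vx x t + chix S K rho x t - vx x t) with (chix S K rho x t) in Hd by ring.
    assert (LF * Rabs (chix S K rho x t) <= Rabs LF * Rabs (chix S K rho x t))
      by (apply Rmult_le_compat_r; [apply Rabs_pos | apply Rle_abs]).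
    apply Rabs_le_between in Hd. lra. }
  pose proof (chit_ge S K rho (Rabs LF) eps x t HS (Rabs_pos LF) eps_ge0 HK).
  pose proof (v_strict x t Ht). lra.
Qed.

Lemma penalized_no_interior_max S K rho LF xs ts : 0 <= S ->
  (forall p q, Rabs p <= M + S -> Rabs q <= M + S -> Rabs (F p - F q) <= LF * Rabs (p - q)) ->
  Rabs LF + 3 * eps <= K -> 0 < ts ->
  ~ (forall y s, 0 <= s ->
       u y s - (v y s + chi S K rho y s) <= u xs ts - (v xs ts + chi S K rho xs ts)).
Proof.
  intros HS HFlip HK Hts Hmax.
  assert (Hloc : loc_max_at (fun y s => u y s - (v y s + chi S K rho y s)) xs ts).
  { exists 1. split; [lra|]. intros y s _ _ Hs. apply Hmax. lra. }
  pose proof (u_sub _ _ _ _ xs ts (C21_test_plus _ _ _ _ _ _ _ _ v_C21 (C21_test_chi S K rho))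
                Hts Hloc) as Hvisc.
  pose proof (penalized_strict_supersol S K rho LF xs ts HS HFlip HK Hts).
  cbv beta in Hvisc. lra.
Qed.

Lemma penalized_time_equicont S K rho : 0 <= S -> 0 <= K ->
  time_equicont (fun x t => u x t - (v x t + chi S K rho x t)).
Proof.
  intros HS HK. apply time_equicont_minus; [apply sol_class_time_equicont, u_sol|].
  apply (time_lipschitz_equicont _ (L + S * K)). intros x t s Ht Hs.
  replace (v x t + chi S K rho x t - (v x s + chi S K rho x s))
    with ((v x t - v x s) + (chi S K rho x t - chi S K rho x s)) by ring.
  eapply Rle_trans; [apply Rabs_triang|].
  pose proof (v_time_lip x t s Ht Hs). pose proof (chi_time_lipschitz S K rho x t s HS HK). lra.
Qed.

Lemma penalized_coercive B K rho : 0 <= B -> 1 <= K ->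
  (forall x t, 0 <= t -> Rabs (u x t - u 0 0) <= B * (1 + Rabs x + t)) ->
  forall x t, 0 <= t ->
    u x t - (v x t + chi (B + Rabs A + 1) K rho x t)
    <= u 0 0 + B + Rabs A + (B + Rabs A + 1) * rho - (Rabs x + t).
Proof.
  intros HB HK Hgrowth x t Ht.
  pose proof (Hgrowth x t Ht) as Hu. apply Rabs_le_between in Hu.
  pose proof (Rabs_pos A). pose proof (Rabs_pos x). pose proof (Rle_abs A).
  pose proof (v_lower x t Ht) as Hv.
  pose proof (chi_ge (B + Rabs A + 1) K rho x t ltac:(lra) HK Ht) as Hchi.
  assert (- Rabs A * (1 + Rabs x + t) <= - A * (1 + Rabs x + t)) by nra.
  nra.
Qed.

Lemma subsol_le_penalized : exists S K, 0 <= S /\ 0 <= K /\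
  forall rho x t, 0 <= t -> u x t <= v x t + chi S K rho x t.
Proof.
  destruct (sol_class_linear_growth u u_sol) as [B [HB Hgrowth]].
  set (S := B + Rabs A + 1). assert (HS : 1 <= S) by (unfold S; pose proof (Rabs_pos A); lra).
  destruct (F_loc_lip (M + S)) as [LF HLF].
  set (K := Rabs LF + 3 * eps + 1).
  assert (HK : 1 <= K) by (unfold K; pose proof (Rabs_pos LF); lra).
  exists S, K. split; [lra|]. split; [lra|]. intros rho x0 t0 Ht0.
  destruct (coercive_attains_max (fun x t => u x t - (v x t + chi S K rho x t))
              (u 0 0 + B + Rabs A + S * rho)) as [xs [ts [[Hts | Hts] Hmax]]].
  - intros t x Ht. apply continuity_pt_minus; [apply sol_class_continuity_pt_x; auto|].
    apply continuity_pt_plus; apply cont2_continuity_pt_x; [apply v_C21 | apply C21_test_chi].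
  - apply penalized_time_equicont; lra.
  - apply penalized_coercive; assumption.
  - exfalso. apply (penalized_no_interior_max S K rho LF xs ts); auto; [lra | unfold K; lra].
  - subst ts. pose proof (Hmax x0 t0 Ht0) as Hx0. cbv beta in Hx0.
    pose proof (u_le_v_init xs). pose proof (chi_nonneg S K rho xs 0 ltac:(lra)). lra.
Qed.

Theorem visc_subsol_le_strict_supersol x t : 0 <= t -> u x t <= v x t.
Proof.
  intros Ht. destruct subsol_le_penalized as [S [K [HS [HK Hpen]]]].
  apply Rle_plus_epsilon. intros err Herr.
  set (rho := sabs 1 x + K * t + S / err + 1).
  assert (HSe : 0 <= S / err) by (apply Rdiv_le_0_compat; lra).
  pose proof (Hpen rho x t Ht).
  pose proof (chi_le S K rho x t HS ltac:(unfold rho; lra)) as Hchi.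
  replace (rho - (sabs 1 x + K * t)) with (S / err + 1) in Hchi by (unfold rho; ring).
  assert (S / (4 * (S / err + 1)) <= err).
  { apply (Rmult_le_reg_r (4 * (S / err + 1))); [lra|].
    replace (S / (4 * (S / err + 1)) * (4 * (S / err + 1))) with S by (field; lra).
    replace (err * (4 * (S / err + 1))) with (4 * S + 4 * err) by (field; lra). lra. }
  lra.
Qed.

End Comparison.

Lemma loc_lipschitz_opp F : loc_lipschitz F -> loc_lipschitz (fun p => - F (- p)).
Proof.
  intros HF r. destruct (HF r) as [L HL]. exists L. intros p q Hp Hq.
  replace (- F (- p) - - F (- q)) with (- (F (- p) - F (- q))) by ring.
  replace (p - q) with (- (- p - - q)) by ring.
  rewrite !Rabs_Ropp. apply HL; rewrite Rabs_Ropp; assumption.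
Qed.

Lemma sol_class_opp u : sol_class u -> sol_class (fun x t => - u x t).
Proof.
  intros [Hu [L HL]]. split.
  - intros e He. destruct (Hu e He) as [d [Hd Hud]]. exists d. split; [exact Hd|].
    intros x y t s Ht Hs Hxy Hts.
    replace (- u y s - - u x t) with (- (u y s - u x t)) by ring.
    rewrite Rabs_Ropp. auto.
  - exists L. intros x y t Ht.
    replace (- u x t - - u y t) with (- (u x t - u y t)) by ring.
    rewrite Rabs_Ropp. auto.
Qed.

Lemma visc_supersol_opp eps F u :
  visc_supersol eps F u -> visc_subsol eps (fun p => - F (- p)) (fun x t => - u x t).
Proof.
  intros Hsup phi phit phix phixx x0 t0 Hphi Ht0 [r [Hr Hmax]].
  assert (Hmin : loc_min_at (fun y s => u y s - - phi y s) x0 t0).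
  { exists r. split; [exact Hr|]. intros y s Hy Hs Hs0. pose proof (Hmax y s Hy Hs Hs0). lra. }
  pose proof (Hsup _ _ _ _ x0 t0 (C21_test_opp _ _ _ _ Hphi) Ht0 Hmin).
  cbv beta. lra.
Qed.

Theorem strict_subsol_le_visc_supersol eps F u v vt vx vxx M L A :
  0 <= eps -> loc_lipschitz F -> sol_class u -> visc_supersol eps F u ->
  C21_test v vt vx vxx ->
  (forall x t, 0 < t -> vt x t + F (vx x t) - eps * vxx x t < 0) ->
  (forall x t, Rabs (vx x t) <= M) ->
  (forall x t s, 0 <= t -> 0 <= s -> Rabs (v x t - v x s) <= L * Rabs (t - s)) ->
  (forall x t, 0 <= t -> v x t <= A * (1 + Rabs x + t)) ->
  (forall x, v x 0 <= u x 0) ->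
  forall x t, 0 <= t -> v x t <= u x t.
Proof.
  intros Heps HF Hu Hsup Hv Hstrict HvxM HvL HvA Hinit x t Ht.
  cut (- u x t <= - v x t); [lra|].
  apply (visc_subsol_le_strict_supersol eps (fun p => - F (- p)) (fun x t => - u x t)
           (fun x t => - v x t) (fun x t => - vt x t) (fun x t => - vx x t) (fun x t => - vxx x t)
           M L A); auto.
  - apply loc_lipschitz_opp, HF.
  - apply sol_class_opp, Hu.
  - apply visc_supersol_opp, Hsup.
  - apply C21_test_opp, Hv.
  - intros y s Hs. rewrite Ropp_involutive. pose proof (Hstrict y s Hs). lra.
  - intros y s. rewrite Rabs_Ropp. apply HvxM.
  - intros y s s' Hs Hs'. replace (- v y s - - v y s') with (- (v y s - v y s')) by ring.
    rewrite Rabs_Ropp. auto.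
  - intros y s Hs. pose proof (HvA y s Hs). lra.
  - intros y. pose proof (Hinit y). lra.
Qed.

(** * Barriers *)

Definition kink_datum (m c P x : R) : R := m * x + c * Rabs (x + P).

(* The kink of [kink_datum m c P] at [x = - P] travels with speed [P] along
   [kink_dist P x t = 0] and reaches [x = 0] at [t = 1]. *)
Definition kink_dist (P x t : R) : R := x - P * t + P.

Lemma Rabs_kink_dist_sub P x t s : Rabs (kink_dist P x t - kink_dist P x s) = Rabs P * Rabs (t - s).
Proof.
  unfold kink_dist. replace (x - P * t + P - (x - P * s + P)) with (- P * (t - s)) by ring.
  rewrite Rabs_mult, Rabs_Ropp. reflexivity.
Qed.

Lemma kink_datum_lipschitz m c P : 0 <= c -> lipschitz (kink_datum m c P).
Proof.
  intros Hc. exists (Rabs m + c). intros x y. unfold kink_datum.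
  replace (m * x + c * Rabs (x + P) - (m * y + c * Rabs (y + P)))
    with (m * (x - y) + c * (Rabs (x + P) - Rabs (y + P))) by ring.
  eapply Rle_trans; [apply Rabs_triang|]. rewrite !Rabs_mult, (Rabs_pos_eq c) by exact Hc.
  pose proof (Rabs_triang_inv2 (x + P) (y + P)) as Htri.
  replace (x + P - (y + P)) with (x - y) in Htri by ring. nra.
Qed.

Section InviscidBarrier.

Variables (m c P Q eta d : R).
Hypotheses (c_ge0 : 0 <= c) (d_pos : 0 < d).

(* [eta] makes [ibar] a strict supersolution and [sqrt d] is the rounding of the kink. *)
Definition ibar (x t : R) : R :=
  m * (x - P * t) - Q * t + eta * t + c * sabs d (kink_dist P x t).
Definition ibart (x t : R) : R := - (m * P) - Q + eta - c * P * sabs1 d (kink_dist P x t).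
Definition ibarx (x t : R) : R := m + c * sabs1 d (kink_dist P x t).
Definition ibarxx (x t : R) : R := c * sabs2 d (kink_dist P x t).

Lemma C21_test_ibar : C21_test ibar ibart ibarx ibarxx.
Proof.
  split; [split; [|split; [|split; [|split]]]|split];
    try (intros x t; unfold ibar, ibart, ibarx, ibarxx, sabs2, sabs1, sabs, kink_dist;
         derive_smooth ltac:(exact d_pos));
    apply cont2_continuous; intros x t;
    unfold ibar, ibart, ibarx, ibarxx, sabs2, sabs1, sabs, kink_dist; continuity2; simpl;
    repeat apply Rmult_integral_contrapositive_currified; apply sabs_neq0, d_pos.
Qed.

Lemma ibarx_range x t : m - c <= ibarx x t <= m + c.
Proof.
  unfold ibarx. pose proof (Rabs_sabs1_lt1 d (kink_dist P x t) d_pos) as H.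
  apply Rabs_lt_between in H. split; nra.
Qed.

Lemma ibar_transport x t : ibart x t + (P * ibarx x t + Q) = eta.
Proof. unfold ibart, ibarx. ring. Qed.

Lemma ibar_time_lipschitz x t s :
  Rabs (ibar x t - ibar x s) <= (Rabs (- (m * P) - Q + eta) + c * Rabs P) * Rabs (t - s).
Proof.
  unfold ibar.
  replace (m * (x - P * t) - Q * t + eta * t + c * sabs d (kink_dist P x t) -
    (m * (x - P * s) - Q * s + eta * s + c * sabs d (kink_dist P x s)))
    with ((- (m * P) - Q + eta) * (t - s) +
          c * (sabs d (kink_dist P x t) - sabs d (kink_dist P x s))) by ring.
  eapply Rle_trans; [apply Rabs_triang|]. rewrite !Rabs_mult, (Rabs_pos_eq c) by exact c_ge0.
  pose proof (sabs_lipschitz d (kink_dist P x t) (kink_dist P x s) (Rlt_le _ _ d_pos)) as Hlip.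
  rewrite Rabs_kink_dist_sub in Hlip. nra.
Qed.

Lemma ibar_lower x t : 0 <= eta -> 0 <= t ->
  - (Rabs m + Rabs (m * P) + Rabs Q) * (1 + Rabs x + t) <= ibar x t.
Proof.
  intros Heta Ht. unfold ibar.
  pose proof (sabs_pos d (kink_dist P x t) d_pos).
  pose proof (Rle_abs (- (m * x))) as Hmx. pose proof (Rle_abs (m * P)). pose proof (Rle_abs Q).
  rewrite Rabs_Ropp, Rabs_mult in Hmx.
  pose proof (Rabs_pos m). pose proof (Rabs_pos (m * P)). pose proof (Rabs_pos Q). pose proof (Rabs_pos x).
  nra.
Qed.

Lemma ibar_init x : kink_datum m c P x <= ibar x 0.
Proof.
  unfold kink_datum, ibar, kink_dist.
  replace (x - P * 0 + P) with (x + P) by ring.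
  pose proof (Rabs_le_sabs d (x + P) (Rlt_le _ _ d_pos)). nra.
Qed.

Lemma ibar_at_kink : ibar 0 1 = - (m * P) - Q + eta + c * sqrt d.
Proof.
  unfold ibar, sabs, kink_dist. replace (0 - P * 1 + P) with 0 by ring.
  replace (0 * 0 + d) with d by ring. ring.
Qed.

End InviscidBarrier.

Lemma visc_sol_HJ_subsol F u : visc_sol_HJ F u -> visc_subsol 0 F u.
Proof.
  intros [_ [Hsub _]] phi phit phix phixx x0 t0 [Hphi _] Ht0 Hmax.
  rewrite Rmult_0_l, Rminus_0_r. exact (Hsub _ _ _ _ _ Hphi Ht0 Hmax).
Qed.

Lemma HJ_le_at_kink F P Q m c u :
  loc_lipschitz F -> (forall p, m - c <= p <= m + c -> F p = P * p + Q) -> 0 <= c ->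
  sol_class u -> visc_sol_HJ F u -> initial_datum u (kink_datum m c P) ->
  u 0 1 <= - (m * P) - Q.
Proof.
  intros HF Haff Hc Hu Hvisc Hinit. apply Rle_plus_epsilon. intros err Herr.
  set (eta := err / 2). set (delta := err / (2 * (c + 1))).
  assert (Hdelta : 0 < delta) by (apply Rdiv_lt_0_compat; lra).
  assert (Hd : 0 < delta * delta) by nra.
  assert (Hcmp : u 0 1 <= ibar m c P Q eta (delta * delta) 0 1).
  { apply (visc_subsol_le_strict_supersol 0 F u
      (ibar m c P Q eta (delta * delta)) (ibart m c P Q eta (delta * delta))
      (ibarx m c P (delta * delta)) (ibarxx c P (delta * delta))
      (Rabs m + c) (Rabs (- (m * P) - Q + eta) + c * Rabs P) (Rabs m + Rabs (m * P) + Rabs Q));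
      [lra | exact HF | exact Hu | apply visc_sol_HJ_subsol, Hvisc
      | apply C21_test_ibar, Hd | | | | | | lra].
    - intros x t _. rewrite Haff by (apply ibarx_range; assumption).
      rewrite Rmult_0_l, Rminus_0_r, ibar_transport. unfold eta. lra.
    - intros x t. apply Rabs_le_of_range, ibarx_range; assumption.
    - intros x t s _ _. apply ibar_time_lipschitz; assumption.
    - intros x t Ht. apply ibar_lower; unfold eta; lra.
    - intros x. rewrite Hinit. apply ibar_init; assumption. }
  rewrite ibar_at_kink, sqrt_square in Hcmp by lra.
  assert (c * delta <= err / 2).
  { unfold delta. apply (Rmult_le_reg_r (2 * (c + 1))); [lra|].
    replace (c * (err / (2 * (c + 1))) * (2 * (c + 1))) with (c * err) by (field; lra). nra. }
  unfold eta in Hcmp. lra.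
Qed.

(* With [a ^ 2 = tscale t], [r = sabs (tscale t) Y] and [k = tscale' t / e], the viscous
   defect of [vbar] is [- eta] plus [c e] times left minus right side: the widening of the
   kink is paid for by diffusion. *)
Lemma viscous_defect_le a r k : 0 < a -> a <= r -> 0 <= k <= 2 ->
  k / (2 * r) - k / (4 * a) <= a * a / (r * r * r).
Proof.
  intros Ha Har Hk.
  assert (Hr3 : 0 < r * r * r) by (apply Rmult_lt_0_compat; [apply Rmult_lt_0_compat|]; lra).
  apply (Rmult_le_reg_r (4 * a * (r * r * r))); [apply Rmult_lt_0_compat; lra|].
  replace ((k / (2 * r) - k / (4 * a)) * (4 * a * (r * r * r))) with (k * (r * r * (2 * a - r)))
    by (field; lra).
  replace (a * a / (r * r * r) * (4 * a * (r * r * r))) with (4 * (a * a * a)) by (field; lra).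
  assert (Hcubic : r * r * (2 * a - r) <= 2 * (a * a * a)).
  { assert (0 <= (r - 4 * a / 3) * (r - 4 * a / 3) * (r + 2 * a / 3))
      by (apply Rmult_le_pos; [apply Rle_0_sqr | lra]).
    nra. }
  destruct (Rle_dec r (2 * a)).
  - assert (0 <= r * r * (2 * a - r)) by (apply Rmult_le_pos; nra). nra.
  - assert (r * r * (2 * a - r) <= 0) by (apply Rmult_le_0_l; [apply Rle_0_sqr|]; lra).
    assert (0 < a * a * a) by (apply Rmult_lt_0_compat; nra). nra.
Qed.

Section ViscousBarrier.

Variables (m c P Q eta e : R).
Hypotheses (c_ge0 : 0 <= c) (e_pos : 0 < e).

Definition tscale (t : R) : R := e * (t + sabs 1 t).
Definition tscale' (t : R) : R := e * (1 + sabs1 1 t).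

Lemma tscale_pos t : 0 < tscale t.
Proof.
  unfold tscale. pose proof (Rabs_lt_sabs 1 t Rlt_0_1) as H. apply Rabs_lt_between in H.
  apply Rmult_lt_0_compat; lra.
Qed.

Lemma tscale_ge t : 0 <= t -> e <= tscale t.
Proof. intros Ht. unfold tscale. pose proof (sabs_ge1 t). nra. Qed.

Lemma tscale'_range t : 0 <= tscale' t <= 2 * e.
Proof.
  unfold tscale'. pose proof (Rabs_sabs1_lt1 1 t Rlt_0_1) as H. apply Rabs_lt_between in H.
  split; nra.
Qed.

Lemma sqrt_tscale_neq0 t : sqrt (tscale t) <> 0.
Proof. apply Rgt_not_eq, sqrt_lt_R0, tscale_pos. Qed.

Lemma sqrt_plus_tscale_lipschitz b t s : 0 <= b -> 0 <= t -> 0 <= s ->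
  Rabs (sqrt (b + tscale t) - sqrt (b + tscale s)) <= sqrt e * Rabs (t - s).
Proof.
  intros Hb Ht Hs. pose proof (tscale_ge t Ht). pose proof (tscale_ge s Hs).
  pose proof (sqrt_lt_R0 e e_pos).
  eapply Rle_trans; [apply (sqrt_diff_le _ _ e); lra|].
  replace (b + tscale t - (b + tscale s)) with (e * ((t - s) + (sabs 1 t - sabs 1 s)))
    by (unfold tscale; ring).
  rewrite Rabs_mult, (Rabs_pos_eq e) by lra.
  pose proof (Rabs_triang (t - s) (sabs 1 t - sabs 1 s)). pose proof (sabs_lipschitz 1 t s Rle_0_1).
  apply (Rmult_le_reg_r (2 * sqrt e)); [lra|].
  replace (e * Rabs (t - s + (sabs 1 t - sabs 1 s)) / (2 * sqrt e) * (2 * sqrt e))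
    with (e * Rabs (t - s + (sabs 1 t - sabs 1 s))) by (field; lra).
  replace (sqrt e * Rabs (t - s) * (2 * sqrt e)) with (2 * (sqrt e * sqrt e) * Rabs (t - s)) by ring.
  rewrite sqrt_sqrt by lra. nra.
Qed.

(* The kink is rounded off at width [sqrt (tscale t)], growing from [sqrt e] at [t = 0] to
   [sqrt ((1 + sqrt 2) e)] at [t = 1]; this growth lifts [vbar 0 1] by [c sqrt e / 4]. *)
Definition vbar (x t : R) : R :=
  m * (x - P * t) - Q * t - eta * t - c * sqrt e / 2
  + c * (sabs (tscale t) (kink_dist P x t) - sqrt (tscale t) / 2).
Definition vbart (x t : R) : R :=
  - (m * P) - Q - eta
  + c * ((tscale' t - 2 * P * kink_dist P x t) / (2 * sabs (tscale t) (kink_dist P x t))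
         - tscale' t / (4 * sqrt (tscale t))).
Definition vbarx (x t : R) : R := m + c * sabs1 (tscale t) (kink_dist P x t).
Definition vbarxx (x t : R) : R := c * sabs2 (tscale t) (kink_dist P x t).

Local Ltac tscale_pos_tac := first [apply Rlt_0_1 | apply tscale_pos | apply sqrt_tscale_neq0].

Lemma C21_test_vbar : C21_test vbar vbart vbarx vbarxx.
Proof.
  split; [split; [|split; [|split; [|split]]]|split];
    try (intros x t;
         unfold vbar, vbart, vbarx, vbarxx, tscale', tscale, sabs2, sabs1, sabs, kink_dist;
         derive_smooth tscale_pos_tac);
    apply cont2_continuous; intros x t;
    unfold vbar, vbart, vbarx, vbarxx, tscale', tscale, sabs2, sabs1, sabs, kink_dist;
    continuity2; simpl; repeat apply Rmult_integral_contrapositive_currified;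
    first [apply sabs_neq0; tscale_pos_tac | tscale_pos_tac | lra].
Qed.

Lemma vbar_subsol x t : vbart x t + (P * vbarx x t + Q) - e * vbarxx x t <= - eta.
Proof.
  unfold vbart, vbarx, vbarxx. rewrite sabs2E by apply tscale_pos.
  set (Y := kink_dist P x t). set (a := sqrt (tscale t)). set (r := sabs (tscale t) Y).
  pose proof (tscale_pos t) as Hs. pose proof (tscale'_range t) as Hk.
  assert (Ha : 0 < a) by (apply sqrt_lt_R0, Hs).
  assert (Ea : tscale t = a * a) by (unfold a; rewrite sqrt_sqrt; lra).
  assert (Hr : a <= r).
  { unfold r, sabs. apply sqrt_le_1_alt. pose proof (Rle_0_sqr Y). unfold Rsqr in *. lra. }
  assert (Hr0 : 0 < r) by lra.
  pose proof (viscous_defect_le a r (tscale' t / e) Ha Hr) as Hdef.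
  assert (Hke : 0 <= tscale' t / e <= 2).
  { split; [apply Rdiv_le_0_compat; lra|].
    apply (Rmult_le_reg_r e); [exact e_pos|]. unfold Rdiv. rewrite Rmult_assoc, Rinv_l; lra. }
  specialize (Hdef Hke).
  unfold sabs1. fold r. rewrite Ea.
  replace (- (m * P) - Q - eta + c * ((tscale' t - 2 * P * Y) / (2 * r) - tscale' t / (4 * a))
           + (P * (m + c * (Y / r)) + Q) - e * (c * (a * a / (r * r * r))))
    with (- eta + c * e * (tscale' t / e / (2 * r) - tscale' t / e / (4 * a) - a * a / (r * r * r)))
    by (field; lra).
  assert (0 <= c * e) by nra. nra.
Qed.

Lemma vbarx_range x t : m - c <= vbarx x t <= m + c.
Proof.
  unfold vbarx. pose proof (Rabs_sabs1_lt1 (tscale t) (kink_dist P x t) (tscale_pos t)) as H.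
  apply Rabs_lt_between in H. split; nra.
Qed.

Lemma vbar_time_lipschitz x t s : 0 <= t -> 0 <= s ->
  Rabs (vbar x t - vbar x s) <=
  (Rabs (- (m * P) - Q - eta) + c * (Rabs P + 2 * sqrt e)) * Rabs (t - s).
Proof.
  intros Ht Hs. unfold vbar.
  set (Yt := kink_dist P x t). set (Ys := kink_dist P x s).
  assert (H1 : Rabs (sabs (tscale t) Yt - sabs (tscale t) Ys) <= Rabs P * Rabs (t - s)).
  { rewrite <- (Rabs_kink_dist_sub P x t s). apply sabs_lipschitz. left. apply tscale_pos. }
  assert (H2 : Rabs (sabs (tscale t) Ys - sabs (tscale s) Ys) <= sqrt e * Rabs (t - s))
    by (apply sqrt_plus_tscale_lipschitz; [apply Rle_0_sqr | |]; assumption).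
  assert (H3 : Rabs (sqrt (tscale t) - sqrt (tscale s)) <= sqrt e * Rabs (t - s)).
  { rewrite <- (Rplus_0_l (tscale t)), <- (Rplus_0_l (tscale s)).
    apply sqrt_plus_tscale_lipschitz; lra. }
  replace (m * (x - P * t) - Q * t - eta * t - c * sqrt e / 2 + c * (sabs (tscale t) Yt - sqrt (tscale t) / 2)
     - (m * (x - P * s) - Q * s - eta * s - c * sqrt e / 2 + c * (sabs (tscale s) Ys - sqrt (tscale s) / 2)))
    with ((- (m * P) - Q - eta) * (t - s) + c * ((sabs (tscale t) Yt - sabs (tscale t) Ys)
          + (sabs (tscale t) Ys - sabs (tscale s) Ys) - (sqrt (tscale t) - sqrt (tscale s)) / 2))
    by field.
  eapply Rle_trans; [apply Rabs_triang|]. rewrite !Rabs_mult, (Rabs_pos_eq c) by exact c_ge0.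
  assert (Rabs ((sabs (tscale t) Yt - sabs (tscale t) Ys) + (sabs (tscale t) Ys - sabs (tscale s) Ys)
            - (sqrt (tscale t) - sqrt (tscale s)) / 2) <= (Rabs P + 2 * sqrt e) * Rabs (t - s)).
  { apply Rabs_le_between in H1, H2, H3. pose proof (sqrt_pos e). pose proof (Rabs_pos (t - s)).
    apply Rabs_le. nra. }
  pose proof (Rabs_pos (t - s)). nra.
Qed.

Lemma vbar_upper x t : e <= 1 -> 0 <= eta -> 0 <= t ->
  vbar x t <= (Rabs m + Rabs (m * P) + Rabs Q + c * (Rabs P + 1)) * (1 + Rabs x + t).
Proof.
  intros He1 Heta Ht.
  pose proof (tscale_pos t) as Hs.
  assert (Hsqrt : sqrt (tscale t) <= t + 1).
  { rewrite <- (sqrt_square (t + 1)) by lra. apply sqrt_le_1_alt. unfold tscale.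
    pose proof (sabs_le 1 t Rle_0_1) as Ht1. rewrite sqrt_1, Rabs_pos_eq in Ht1 by exact Ht. nra. }
  pose proof (sabs_le (tscale t) (kink_dist P x t) (Rlt_le _ _ Hs)) as HY.
  assert (HYabs : Rabs (kink_dist P x t) <= Rabs x + Rabs P * t + Rabs P).
  { unfold kink_dist. eapply Rle_trans; [apply Rabs_triang|].
    unfold Rminus. eapply Rle_trans; [apply Rplus_le_compat_r, Rabs_triang|].
    rewrite Rabs_Ropp, Rabs_mult, (Rabs_pos_eq t) by exact Ht. lra. }
  pose proof (Rabs_pos m). pose proof (Rabs_pos (m * P)). pose proof (Rabs_pos Q).
  pose proof (Rabs_pos P). pose proof (Rabs_pos x).
  assert (Hlin : vbar x t <= Rabs m * Rabs x + (Rabs (m * P) + Rabs Q) * t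
                             + c * (Rabs x + Rabs P * t + Rabs P + t + 1)).
  { unfold vbar.
    assert (m * x <= Rabs m * Rabs x) by (rewrite <- Rabs_mult; apply Rle_abs).
    assert (- (m * P) * t <= Rabs (m * P) * t)
      by (apply Rmult_le_compat_r; [exact Ht | rewrite <- Rabs_Ropp; apply Rle_abs]).
    assert (- Q * t <= Rabs Q * t)
      by (apply Rmult_le_compat_r; [exact Ht | rewrite <- Rabs_Ropp; apply Rle_abs]).
    assert (0 <= eta * t) by nra.
    assert (0 <= c * sqrt e) by (apply Rmult_le_pos; [exact c_ge0 | apply sqrt_pos]).
    assert (0 <= c * sqrt (tscale t)) by (apply Rmult_le_pos; [exact c_ge0 | apply sqrt_pos]).
    assert (c * sabs (tscale t) (kink_dist P x t) <= c * (Rabs x + Rabs P * t + Rabs P + t + 1))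
      by (apply Rmult_le_compat_l; [exact c_ge0 | lra]).
    lra. }
  assert (0 <= c * Rabs P) by nra.
  nra.
Qed.

Lemma vbar_init x : vbar x 0 <= kink_datum m c P x.
Proof.
  unfold vbar, kink_datum, kink_dist, tscale.
  replace (x - P * 0 + P) with (x + P) by ring.
  assert (E : e * (0 + sabs 1 0) = e) by (unfold sabs; rewrite Rmult_0_l, !Rplus_0_l, sqrt_1; ring).
  rewrite E. pose proof (sabs_le e (x + P) (Rlt_le _ _ e_pos)). nra.
Qed.

Lemma vbar_at_kink : - (m * P) - Q - eta + c * sqrt e / 4 <= vbar 0 1.
Proof.
  unfold vbar, kink_dist, sabs. replace (0 - P * 1 + P) with 0 by ring. rewrite Rmult_0_l, Rplus_0_l.
  assert (Hs : 3 / 2 * sqrt e <= sqrt (tscale 1)).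
  { unfold tscale, sabs. replace (1 * 1 + 1) with 2 by ring.
    assert (H2 : 5 / 4 <= sqrt 2).
    { rewrite <- (sqrt_square (5 / 4)) by lra. apply sqrt_le_1_alt. lra. }
    rewrite <- (sqrt_square (3 / 2)) by lra. rewrite <- sqrt_mult by lra.
    apply sqrt_le_1_alt. nra. }
  nra.
Qed.

End ViscousBarrier.

Lemma viscous_ge_at_kink F P Q m c eps u :
  loc_lipschitz F -> (forall p, m - c <= p <= m + c -> F p = P * p + Q) -> 0 <= c ->
  0 < eps <= 1 -> sol_class u -> visc_sol_viscous eps F u -> initial_datum u (kink_datum m c P) ->
  - (m * P) - Q + c * sqrt eps / 4 <= u 0 1.
Proof.
  intros HF Haff Hc Heps Hu [_ [_ Hsuper]] Hinit. apply Rle_plus_epsilon. intros eta Heta.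
  assert (Hcmp : vbar m c P Q eta eps 0 1 <= u 0 1).
  { apply (strict_subsol_le_visc_supersol eps F u
      (vbar m c P Q eta eps) (vbart m c P Q eta eps) (vbarx m c P eps) (vbarxx c P eps)
      (Rabs m + c) (Rabs (- (m * P) - Q - eta) + c * (Rabs P + 2 * sqrt eps))
      (Rabs m + Rabs (m * P) + Rabs Q + c * (Rabs P + 1)));
      [lra | exact HF | exact Hu | exact Hsuper | apply C21_test_vbar; lra | | | | | | lra].
    - intros x t _. rewrite Haff by (apply vbarx_range; lra).
      pose proof (vbar_subsol m c P Q eta eps Hc ltac:(lra) x t). lra.
    - intros x t. apply Rabs_le_of_range, vbarx_range; lra.
    - intros x t s Ht Hs. apply vbar_time_lipschitz; lra.
    - intros x t Ht. apply vbar_upper; lra.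
    - intros x. rewrite Hinit. apply vbar_init; lra. }
  pose proof (vbar_at_kink m c P Q eta eps Hc ltac:(lra)). lra.
Qed.

Theorem corollary1p4 (F : R -> R) (a b : R) :
  loc_lipschitz F -> a < b -> affine_on F a b ->
  exists (g : R -> R) (c0 : R), lipschitz g /\ 0 < c0 /\
    forall (eps : R) (ueps u : R -> R -> R),
      0 < eps < 1/4 ->
      sol_class ueps -> visc_sol_viscous eps F ueps -> initial_datum ueps g ->
      sol_class u -> visc_sol_HJ F u -> initial_datum u g ->
      Rabs (ueps 0 1 - u 0 1) >= c0 * sqrt eps.
Proof.
  intros HF Hab [P [Q HPQ]].
  set (m := (a + b) / 2). set (c := (b - a) / 4).
  assert (Hc : 0 < c) by (unfold c; lra).
  assert (Haff : forall p, m - c <= p <= m + c -> F p = P * p + Q)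
    by (intros p Hp; apply HPQ; unfold m, c in Hp; lra).
  exists (kink_datum m c P), (c / 4). split; [apply kink_datum_lipschitz; lra|]. split; [lra|].
  intros eps ueps u Heps Hs1 Hv1 Hi1 Hs2 Hv2 Hi2.
  pose proof (viscous_ge_at_kink F P Q m c eps ueps HF Haff (Rlt_le _ _ Hc) ltac:(lra) Hs1 Hv1 Hi1).
  pose proof (HJ_le_at_kink F P Q m c u HF Haff (Rlt_le _ _ Hc) Hs2 Hv2 Hi2).
  apply Rle_ge. eapply Rle_trans; [|apply Rle_abs]. lra.
Qed.
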